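(* Let $S\subset\mathbb{R}^3$ be the sphere of radius $1/2$ centered at $(0,0,1/2)$, and let $\pi_S:\mathbb{R}^2\to S$ be the stereographic projection (identifying $\mathbb{R}^2$ with the plane $z=0$, a point $(x,y,0)$ is mapped to the intersection point, other than $N=(0,0,1)$, of $S$ with the line through $N$ and $(x,y,0)$). Let $A\subset\mathbb{R}^2$ be an unbounded set with $0\notin\overline A$. Then $\overline{\dim}_BA=\overline{\dim}_B\pi_S(A)$ and $\underline{\dim}_BA=\underline{\dim}_B\pi_S(A)$, where the box dimensions of $\pi_S(A)$ are computed as a subset of $\mathbb{R}^3$. Furthermore, if $A$ is Minkowski nondegenerate, then so is $\pi_S(A)$.
   Context: For a nonempty bounded $B\subset\mathbb{R}^n$, with $B_\varepsilon$ its Euclidean $\varepsilon$-neighbourhood in $\mathbb{R}^n$ and $|B_\varepsilon|$ its Lebesgue measure, $\mathcal M^{*s}(B)=\limsup_{\varepsilon\to0}|B_\varepsilon|/\varepsilon^{n-s}$, $\mathcal M_*^s(B)$ is the same with $\liminf$, $\overline{\dim}_BB=\inf\{s\ge0:\mathcal M^{*s}(B)=0\}$, $\underline{\dim}_BB=\inf\{s\ge0:\mathcal M_*^{s}(B)=0\}$; $B$ is Minkowski nondegenerate if there is $d\ge0$ with $0<\mathcal M_*^d(B)\le\mathcal M^{*d}(B)<\infty$. For an unbounded $A\subset\mathbb{R}^n$ with $0\notin\overline A$, with $\Phi(x)=x/|x|^2$, the box dimensions, Minkowski contents and Minkowski nondegeneracy of $A$ are defined as those of the bounded set $\Phi(A)$.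 *)

From HB Require Import structures.
From mathcomp Require Import all_boot all_order all_algebra.
From mathcomp Require Import all_classical all_reals all_analysis.
Set Implicit Arguments. Unset Strict Implicit. Unset Printing Implicit Defensive.
Import Order.TTheory GRing.Theory Num.Theory.
Import numFieldNormedType.Exports.
Local Open Scope classical_set_scope.
Local Open Scope ring_scope.

Section Minkowski.
Context {T : Type} {R : realType} (vol : set T -> \bar R)
        (dist : T -> T -> R) (n : nat).

Definition eps_nbhd (B : set T) (e : R) : set T :=
  [set x | exists2 b, B b & dist x b < e].

Definition mink_ratio (B : set T) (s : R) (e : R) : \bar R :=
  (vol (eps_nbhd B e) * ((e `^ (n%:R - s))^-1)%:E)%E.

Definition upper_mink (B : set T) (s : R) : \bar R :=
  limf_esup (mink_ratio B s) (0%R)^'+.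
Definition lower_mink (B : set T) (s : R) : \bar R :=
  limf_einf (mink_ratio B s) (0%R)^'+.

Definition upper_box_dim (B : set T) : \bar R :=
  ereal_inf [set s%:E | s in [set s : R | 0 <= s /\ upper_mink B s = 0%E]].
Definition lower_box_dim (B : set T) : \bar R :=
  ereal_inf [set s%:E | s in [set s : R | 0 <= s /\ lower_mink B s = 0%E]].

Definition mink_nondegenerate (B : set T) : Prop :=
  exists d : R, 0 <= d /\
    (0 < lower_mink B d)%E /\ (lower_mink B d <= upper_mink B d)%E /\
    (upper_mink B d < +oo)%E.

End Minkowski.

Section Euclid.
Context {R : realType}.

Definition norm2 (p : R * R) : R := Num.sqrt (p.1 ^+ 2 + p.2 ^+ 2).
Definition dist2 (p q : R * R) : R := norm2 (p.1 - q.1, p.2 - q.2).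
Definition dist3 (p q : (R * R) * R) : R :=
  Num.sqrt ((p.1.1 - q.1.1) ^+ 2 + (p.1.2 - q.1.2) ^+ 2 + (p.2 - q.2) ^+ 2).

Definition leb2 : set (R * R) -> \bar R :=
  (@lebesgue_measure R \x @lebesgue_measure R)%E.
Definition leb3 : set ((R * R) * R) -> \bar R :=
  ((@lebesgue_measure R \x @lebesgue_measure R) \x @lebesgue_measure R)%E.

Definition bounded2 (A : set (R * R)) : Prop :=
  exists M : R, forall p, A p -> norm2 p <= M.

Definition Phi2 (p : R * R) : R * R :=
  (p.1 / (norm2 p ^+ 2), p.2 / (norm2 p ^+ 2)).

(* stereographic projection onto the sphere of radius 1/2 centred at
   (0,0,1/2): the second intersection of S with the line through
   N = (0,0,1) and (x,y,0). *)
Definition stereo (p : R * R) : (R * R) * R :=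
  let r2 := p.1 ^+ 2 + p.2 ^+ 2 in
  ((p.1 / (1 + r2), p.2 / (1 + r2)), r2 / (1 + r2)).

Definition upper_box_dim2 := upper_box_dim leb2 dist2 2.
Definition lower_box_dim2 := lower_box_dim leb2 dist2 2.
Definition nondeg2 := mink_nondegenerate leb2 dist2 2.
Definition upper_box_dim3 := upper_box_dim leb3 dist3 3.
Definition lower_box_dim3 := lower_box_dim leb3 dist3 3.
Definition nondeg3 := mink_nondegenerate leb3 dist3 3.

(* for unbounded A with 0 notin closure A: via Phi(A) *)
Definition upper_box_dim_unb (A : set (R * R)) := upper_box_dim2 (Phi2 @` A).
Definition lower_box_dim_unb (A : set (R * R)) := lower_box_dim2 (Phi2 @` A).
Definition nondeg_unb (A : set (R * R)) := nondeg2 (Phi2 @` A).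

End Euclid.

(* The box dimensions of A are by definition those of the bounded set
   B = Phi2(A), and stereo(A) = g(B) for the map g = stereo o Phi2,
   g(q) = (q, 1) / (1 + |q|^2), which is smooth at the origin.  The identity
   |g(q) - g(q')|^2 (1 + |q|^2) (1 + |q'|^2) = |q - q'|^2 makes g bi-Lipschitz
   on the bounded set B.  Comparing the volumes of e-neighbourhoods through a
   maximal e-separated subset of B shows that the ratios |B_e| / e^(2 - s) and
   |g(B)_e| / e^(3 - s) bound each other up to constants and a rescaling of e,
   since both are comparable to N(e) e^s for the packing number N(e).  Hence
   the upper and lower Minkowski contents of B and g(B) vanish for the same s,
   and nondegeneracy transfers. *)

From HB Require Import structures.
From mathcomp Require Import all_boot all_order all_algebra.
From mathcomp Require Import all_classical all_reals all_analysis.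
From mathcomp.algebra_tactics Require Import ring lra.
Set Implicit Arguments. Unset Strict Implicit. Unset Printing Implicit Defensive.
Import Order.TTheory GRing.Theory Num.Theory.
Import numFieldNormedType.Exports.
Local Open Scope classical_set_scope.
Local Open Scope ring_scope.

Section limits_at_right0.
Variable R : realType.
Implicit Types (f h : R -> \bar R) (V : set R).

Lemma at_right0P V :
  0^'+ V <-> exists2 d : R, 0 < d & forall y, 0 < y -> y < d -> V y.
Proof.
split=> [/nbhs_ballP[d d0 dV]|[d d0 dV]].
  exists d => // y y0 yd; apply: dV => //.
  by rewrite /ball /= sub0r normrN gtr0_norm.
apply/nbhs_ballP; exists d => // y /=; rewrite /ball /= sub0r normrN => yd y0.
by apply: dV; rewrite // -(gtr0_norm y0).
Qed.

Lemma at_right0_dilate V (a : R) : 0 < a -> 0^'+ V ->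
  0^'+ [set e | 0 < e /\ V (a * e)].
Proof.
move=> a0 /at_right0P[d d0 dV]; apply/at_right0P; exists (d / a).
  by rewrite divr_gt0.
move=> y y0 yd; split => //; apply: dV; first by rewrite mulr_gt0.
by rewrite mulrC -ltr_pdivlMr.
Qed.

Local Open Scope ereal_scope.

Lemma le_limf_esup_dilate f h (K a : R) : (0 < K)%R -> (0 < a)%R ->
  (forall e, (0 < e)%R -> f e <= K%:E * h (a * e)%R) ->
  limf_esup f 0^'+ <= K%:E * limf_esup h 0^'+.
Proof.
move=> K0 a0 fh; rewrite -lee_pdivrMl // [X in _ <= X]limf_esupE.
apply: le_ereal_inf_tmp => _ [V hV <-]; rewrite lee_pdivrMl // limf_esupE.
apply: (@le_trans _ _ (ereal_sup (f @` [set e | (0 < e)%R /\ V (a * e)%R]))).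
  apply: ereal_inf_lbound; exists [set e | (0 < e)%R /\ V (a * e)%R] => //.
  exact: at_right0_dilate.
apply: ge_ereal_sup => _ [e [e0 Vae] <-]; apply: le_trans (fh e e0) _.
by apply: lee_wpmul2l; [rewrite lee_fin ltW|apply: ereal_sup_ubound; exists (a * e)%R].
Qed.

Lemma le_limf_einf_dilate f h (K a : R) : (0 < K)%R -> (0 < a)%R ->
  (forall e, (0 < e)%R -> f e <= K%:E * h (a * e)%R) ->
  limf_einf f 0^'+ <= K%:E * limf_einf h 0^'+.
Proof.
move=> K0 a0 fh; rewrite [X in X <= _]limf_einfE.
apply: ge_ereal_sup => _ [V hV <-]; rewrite -lee_pdivrMl // limf_einfE.
set W := [set y | (0 < y)%R /\ V (a^-1 * y)%R].
apply: le_ereal_sup_tmp; exists (ereal_inf (h @` W)).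
  by exists W => //; apply: at_right0_dilate; rewrite ?invr_gt0.
apply: le_ereal_inf_tmp => _ [y [y0 Vy] <-]; rewrite lee_pdivrMl //.
apply: (@le_trans _ _ (f (a^-1 * y)%R)).
  by apply: ereal_inf_lbound; exists (a^-1 * y)%R.
by have := fh (a^-1 * y)%R; rewrite mulrA divff ?gt_eqF // mul1r; apply;
  rewrite mulr_gt0 ?invr_gt0.
Qed.

Lemma limf_einf_ge0 f : (forall e, 0 <= f e) -> 0 <= limf_einf f 0^'+.
Proof.
move=> f0; rewrite limf_einfE; apply: le_ereal_sup_tmp.
exists (ereal_inf (f @` [set y | (0 < y)%R])).
  by exists [set y | (0 < y)%R] => //; apply/at_right0P; exists 1%R.
by apply: le_ereal_inf_tmp => _ [y _ <-].
Qed.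

Lemma limf_einf_le_esup f : limf_einf f 0^'+ <= limf_esup f 0^'+.
Proof.
rewrite limf_einfE limf_esupE; apply: ge_ereal_sup => _ [V hV <-].
apply: le_ereal_inf_tmp => _ [W hW <-].
have [y [Vy Wy]] : exists y, V y /\ W y.
  have /filter_ex[y []] : 0^'+ (V `&` W) by apply: filterI.
  by exists y.
apply: (@le_trans _ _ (f y)).
  by apply: ereal_inf_lbound; exists y.
by apply: ereal_sup_ubound; exists y.
Qed.

End limits_at_right0.

Section maximal_separated.
Variables (R : realType) (W : eqType) (X : set W) (rho : W -> W -> R) (e : R).

Definition separated (S : seq W) := pairwise (fun v w => e <= rho v w) S.

Lemma exists_maximal_separated (N : nat) :
  (forall S, {in S, forall w, X w} -> separated S -> (size S <= N)%N) ->
  exists S, [/\ {in S, forall w, X w}, separated S &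
                forall w, X w -> has (fun s => rho w s < e) S].
Proof.
move=> sizeN.
pose P k := `[< exists S, [/\ size S = k, {in S, forall w, X w} & separated S] >].
have P0 : exists k, P k by exists 0%N; apply/asboolP; exists [::].
have PN k : P k -> (k <= N)%N by move=> /asboolP[S [<- XS sepS]]; exact: sizeN.
case: (ex_maxnP P0 PN) => _ /asboolP[S [<- XS sepS]] Smax.
exists S; split => // w Xw; apply/negPn/negP => wfar.
suff /Smax : P (size (w :: S)) by rewrite ltnn.
apply/asboolP; exists (w :: S); split => //.
  by move=> v; rewrite in_cons => /predU1P[->|/XS].
rewrite /separated pairwise_cons; apply/andP; split => //.
by apply/allP => s sS; rewrite leNgt; exact: (hasPn wfar).
Qed.

End maximal_separated.

Record ahlfors_regular d (T : measurableType d) (R : realType)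
    (mu : set T -> \bar R) (dist : T -> T -> R) (n : nat) (C : R) : Prop := AhlforsRegular {
  ahlfors_const_gt0 : 0 < C;
  distC : forall x y, dist x y = dist y x;
  dist_triangle : forall x y z, dist x z <= dist x y + dist y z;
  measurable_eps_nbhd : forall A e, measurable (eps_nbhd dist A e);
  ball_volume_ge : forall c r, 0 < r ->
    (((r / C) ^+ n)%:E <= mu (eps_nbhd dist [set c] r))%E;
  ball_volume_le : forall c r, 0 < r ->
    (mu (eps_nbhd dist [set c] r) <= ((C * r) ^+ n)%:E)%E
}.

Lemma eps_nbhd_set1 (T : Type) (R : realType) (dist : T -> T -> R) c r x :
  eps_nbhd dist [set c] r x <-> dist x c < r.
Proof. by split=> [[_ -> //]|]; exists c. Qed.

Section packing.
Context d (T : measurableType d) (R : realType) (mu : {measure set T -> \bar R})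
  (dist : T -> T -> R) (n : nat) (C : R).
Hypothesis reg : ahlfors_regular mu dist n C.
Implicit Types (A : set T) (S : seq T).
Local Notation ball c r := (eps_nbhd dist [set c] r).

Let measurable_nbhd A e : measurable (eps_nbhd dist A e).
Proof. exact: measurable_eps_nbhd reg A e. Qed.

Let measurable_ball c r : measurable (ball c r).
Proof. exact: measurable_nbhd. Qed.

Let measurable_balls S r : measurable (\big[setU/set0]_(s <- S) ball s r).
Proof. by apply: bigsetU_measurable => s _; exact: measurable_ball. Qed.

Lemma measure_big_setU_balls_le S r : 0 < r ->
  (mu (\big[setU/set0]_(s <- S) ball s r) <= ((size S)%:R * (C * r) ^+ n)%:E)%E.
Proof.
move=> r0; elim: S => [|s S IH]; first by rewrite big_nil measure0 mul0r.
rewrite big_cons /= -addn1 natrD mulrDl mul1r EFinD addeC.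
apply: le_trans (measureU2 mu _ _) (leeD (ball_volume_le reg s r0) IH).
  exact: measurable_ball.
exact: measurable_balls.
Qed.

Lemma separated_balls_disjoint x y e : e <= dist x y ->
  ball x (e / 2) `&` ball y (e / 2) = set0.
Proof.
move=> exy; apply/seteqP; split => // z [/eps_nbhd_set1 zx /eps_nbhd_set1 zy].
have := dist_triangle reg x z y; rewrite (distC reg x z); lra.
Qed.

Lemma measure_big_setU_balls_ge S e : 0 < e ->
  pairwise (fun x y => e <= dist x y) S ->
  (((size S)%:R * (e / (2 * C)) ^+ n)%:E <= mu (\big[setU/set0]_(s <- S) ball s (e / 2)))%E.
Proof.
move=> e0; elim: S => [|s S IH]; first by rewrite big_nil measure0 mul0r.
rewrite pairwise_cons => /andP[sfar /IH{}IH].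
rewrite big_cons measureU //; first last.
- rewrite big_distrr /= big1_seq // => t /andP[_ tS].
  exact: separated_balls_disjoint (allP sfar t tS).
rewrite /= -addn1 natrD mulrDl mul1r EFinD addeC; apply: leeD IH.
by rewrite invfM mulrA; apply: (ball_volume_ge reg); rewrite divr_gt0.
Qed.

Lemma separated_packing A S e : 0 < e -> {in S, forall s, A s} ->
  pairwise (fun x y => e <= dist x y) S ->
  (((size S)%:R * (e / (2 * C)) ^+ n)%:E <= mu (eps_nbhd dist A (e / 2)))%E.
Proof.
move=> e0 SA sepS; apply: le_trans (measure_big_setU_balls_ge e0 sepS) _.
apply: le_measure; rewrite ?inE //.
move=> z; rewrite -bigcup_seq => -[s /= sS /eps_nbhd_set1 zs].
by exists s => //; exact: SA.
Qed.

Lemma dense_covering A S e : 0 < e ->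
  (forall x, A x -> has (fun s => dist x s < e) S) ->
  (mu (eps_nbhd dist A e) <= ((size S)%:R * (C * (2 * e)) ^+ n)%:E)%E.
Proof.
move=> e0 Adense; apply: le_trans (measure_big_setU_balls_le S _) => //; last lra.
apply: le_measure; rewrite ?inE //.
move=> z [x Ax zx]; have /hasP[s sS xs] := Adense x Ax.
rewrite -bigcup_seq; exists s => //; apply/eps_nbhd_set1.
by have := dist_triangle reg z x s; lra.
Qed.

Lemma separated_size_le A S c M e : 0 < e -> 0 <= M ->
  (forall x, A x -> dist x c <= M) -> {in S, forall s, A s} ->
  pairwise (fun x y => e <= dist x y) S ->
  (size S)%:R * (e / (2 * C)) ^+ n <= (C * (M + e)) ^+ n.
Proof.
move=> e0 M0 AM SA sepS; rewrite -lee_fin.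
apply: le_trans (separated_packing e0 SA sepS) _.
apply: le_trans (ball_volume_le reg c _) => //; last lra.
apply: le_measure; rewrite ?inE //.
move=> z [x Ax zx]; apply/eps_nbhd_set1.
by have := dist_triangle reg z x c; have := AM x Ax; lra.
Qed.

End packing.

(* The neighbourhood is the union of the countably many cells it contains. *)
Lemma measurable_eps_nbhd_of_cells d (T : measurableType d) (R : realType)
    (dist : T -> T -> R) (I : countType) (cell : I -> set T) (A : set T) (e : R) :
  (forall x y z, dist x z <= dist x y + dist y z) ->
  (forall i, measurable (cell i)) ->
  (forall y r, 0 < r -> exists i, cell i y /\ forall z, cell i z -> dist z y < r) ->
  measurable (eps_nbhd dist A e).
Proof.
move=> triangle mcell fine_cells; set N := eps_nbhd dist A e.
rewrite (_ : N = \bigcup_i (if `[< cell i `<=` N >] then cell i else set0)).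
  apply: countable_bigcupT_measurable; first exact: countableP.
  by move=> i; case: ifP.
apply/seteqP; split=> [y [x Ax yx]|y [i _]]; last by case: asboolP => // iN /iN.
have yx0 : 0 < e - dist y x by rewrite subr_gt0.
have [i [iy icell]] := fine_cells y _ yx0.
exists i => //; case: asboolP => // -[] z /icell zy.
by exists x => //; have := triangle z y x; lra.
Qed.

Section euclidean_space.
Variable R : realType.
Local Notation P3 := ((R * R) * R)%type.
Implicit Types (p q : P3) (a r : R).

Lemma dist3C p q : dist3 p q = dist3 q p.
Proof. by rewrite /dist3; congr Num.sqrt; ring. Qed.

Lemma dist3_triangle (x y z : P3) : dist3 x z <= dist3 x y + dist3 y z.
Proof.
rewrite /dist3.
have -> : x.1.1 - z.1.1 = (x.1.1 - y.1.1) + (y.1.1 - z.1.1) by ring.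
have -> : x.1.2 - z.1.2 = (x.1.2 - y.1.2) + (y.1.2 - z.1.2) by ring.
have -> : x.2 - z.2 = (x.2 - y.2) + (y.2 - z.2) by ring.
move: (x.1.1 - _) (x.1.2 - _) (x.2 - _) (y.1.1 - _) (y.1.2 - _) (y.2 - _).
move=> a1 a2 a3 b1 b2 b3.
set A := a1 ^+ 2 + a2 ^+ 2 + a3 ^+ 2; set B := b1 ^+ 2 + b2 ^+ 2 + b3 ^+ 2.
have A0 : 0 <= A by rewrite /A; nra.
have B0 : 0 <= B by rewrite /B; nra.
have cauchy_schwarz : a1 * b1 + a2 * b2 + a3 * b3 <= Num.sqrt A * Num.sqrt B.
  rewrite -sqrtrM //; apply: le_trans (ler_norm _) _; rewrite -sqrtr_sqr.
  apply: ler_wsqrtr; rewrite /A /B.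
  have := sqr_ge0 (a1 * b2 - a2 * b1); have := sqr_ge0 (a1 * b3 - a3 * b1).
  have := sqr_ge0 (a2 * b3 - a3 * b2); nra.
have := sqrtr_ge0 A; have := sqrtr_ge0 B => sB sA.
rewrite -[X in _ <= X]ger0_norm ?addr_ge0 // -sqrtr_sqr; apply: ler_wsqrtr.
have := sqr_sqrtr A0; have := sqr_sqrtr B0; rewrite /A /B; nra.
Qed.

Lemma dist2_dist3 (p q : R * R) : dist2 p q = dist3 (p, 0) (q, 0).
Proof. by rewrite /dist2 /dist3 /norm2 /= subrr expr0n addr0. Qed.

Lemma ball_dist3 p q a : dist3 p q < a -> ball p a q.
Proof.
have le_sqrt (x y : R) : 0 <= y -> `|x| <= Num.sqrt (x ^+ 2 + y).
  by move=> y0; rewrite -sqrtr_sqr; apply: ler_wsqrtr; lra.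
rewrite /dist3 => pq; split; first split; apply: le_lt_trans pq.
- by rewrite -addrA; apply: le_sqrt; rewrite addr_ge0 ?sqr_ge0.
- rewrite (_ : _ + _ = (p.1.2 - q.1.2) ^+ 2 + ((p.1.1 - q.1.1) ^+ 2 + (p.2 - q.2) ^+ 2));
    last by ring.
  by apply: le_sqrt; rewrite addr_ge0 ?sqr_ge0.
- by rewrite [X in Num.sqrt X]addrC; apply: le_sqrt; rewrite addr_ge0 ?sqr_ge0.
Qed.

Lemma dist3_ball p q a : ball p a q -> dist3 p q < 2 * a.
Proof.
move=> [[pq1 pq2] pq3]; have a0 : 0 < a by apply: le_lt_trans pq3.
have sqr_lt (x : R) : `|x| < a -> x ^+ 2 < a ^+ 2.
  by move/ltr_normlP => [? ?]; nra.
rewrite -[X in _ < X]gtr0_norm ?mulr_gt0 // -sqrtr_sqr ltr_sqrt ?exprn_gt0 ?mulr_gt0 //.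
rewrite exprMn; have := exprn_gt0 2 a0.
by have := sqr_lt _ pq1; have := sqr_lt _ pq2; have := sqr_lt _ pq3; lra.
Qed.

Lemma leb2_ball (c : R * R) a : 0 <= a -> leb2 (ball c a) = ((a *+ 2) ^+ 2)%:E.
Proof.
move=> a0; rewrite /leb2 [ball c a]/(ball c.1 a `*` ball c.2 a).
rewrite product_measure1E; [|exact: measurable_realfun.measurable_ball..].
by rewrite expr2 EFinM; congr (_ * _)%E; exact: lebesgue_measure_ball.
Qed.

Lemma leb3_ball p a : 0 <= a -> leb3 (ball p a) = ((a *+ 2) ^+ 3)%:E.
Proof.
move=> a0; rewrite /leb3 [ball p a]/(ball p.1 a `*` ball p.2 a).
rewrite product_measure1E; last exact: measurable_realfun.measurable_ball.
  rewrite exprSr EFinM; congr (_ * _)%E; first exact (leb2_ball _ a0).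
  exact: lebesgue_measure_ball.
by apply: measurableX; exact: measurable_realfun.measurable_ball.
Qed.

Lemma exists_rat_ball (y r : R) : 0 < r -> exists q : rat, ball (ratr q : R) r y.
Proof.
move=> r0; have [q] := @rat_in_itvoo R (y - r) (y + r) ltac:(lra).
rewrite in_itv /= => /andP[? ?]; exists q; apply/ltr_normlP; split; lra.
Qed.

Lemma exists_rat_ball2 (y : R * R) r : 0 < r ->
  exists q : rat * rat, ball (ratr q.1 : R, ratr q.2 : R) r y.
Proof.
move=> r0; have [q1 ?] := exists_rat_ball y.1 r0; have [q2 ?] := exists_rat_ball y.2 r0.
by exists (q1, q2).
Qed.

Lemma exists_pos_rat r : 0 < r -> exists2 q : rat, 0 < (ratr q : R) & ratr q < r / 4.
Proof.
move=> r0; have [q] := @rat_in_itvoo R 0 (r / 4) ltac:(lra).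
by rewrite in_itv /= => /andP[? ?]; exists q.
Qed.

Let measurable_cube2 (c : R * R) r : measurable (ball c r).
Proof. by apply: measurableX; exact: measurable_realfun.measurable_ball. Qed.

Let measurable_cube3 c r : measurable (ball c r : set P3).
Proof.
by apply: measurableX; [apply: measurableX|]; exact: measurable_realfun.measurable_ball.
Qed.

Lemma measurable_eps_nbhd3 (A : set P3) e : measurable (eps_nbhd dist3 A e).
Proof.
apply: (measurable_eps_nbhd_of_cells (cell :=
  (fun i : (rat * rat * rat) * rat =>
    ball ((ratr i.1.1.1 : R, ratr i.1.1.2 : R), ratr i.1.2 : R) (ratr i.2)))) => //.
  exact: dist3_triangle.
move=> y r r0; have [rho rho0 rhor] := exists_pos_rat r0.
have [[q1 q2] yq12] := exists_rat_ball2 y.1 rho0.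
have [q3 yq3] := exists_rat_ball y.2 rho0.
have yq : ball ((ratr q1 : R, ratr q2 : R), ratr q3 : R) (ratr rho) y by split.
exists ((q1, q2, q3), rho); split => // z qz; rewrite dist3C.
by apply: lt_le_trans (dist3_ball (ball_triangle (ball_sym yq) qz)) _; lra.
Qed.

Lemma measurable_eps_nbhd2 (A : set (R * R)) e : measurable (eps_nbhd dist2 A e).
Proof.
apply: (measurable_eps_nbhd_of_cells (cell :=
  (fun i : (rat * rat) * rat => ball (ratr i.1.1 : R, ratr i.1.2 : R) (ratr i.2)))) => //.
  by move=> x y z; rewrite !dist2_dist3; exact: dist3_triangle.
move=> y r r0; have [rho rho0 rhor] := exists_pos_rat r0.
have [[q1 q2] yq] := exists_rat_ball2 y rho0.
exists ((q1, q2), rho); split => // z qz; rewrite dist2_dist3 dist3C.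
have yz : ball (y, 0 : R) (ratr rho + ratr rho) (z, 0).
  by split; [exact: ball_triangle (ball_sym yq) qz|apply: ballxx; lra].
by apply: lt_le_trans (dist3_ball yz) _; lra.
Qed.

Lemma leb3_eps_ball_ge (c : P3) r : 0 < r ->
  (((r / 2) ^+ 3)%:E <= leb3 (eps_nbhd dist3 [set c] r))%E.
Proof.
move=> r0; have sub : ball c (r / 2) `<=` eps_nbhd dist3 [set c] r.
  by move=> z /dist3_ball cz; apply/eps_nbhd_set1; rewrite dist3C; lra.
apply: (@le_trans _ _ (leb3 (ball c (r / 2)))).
  by rewrite leb3_ball ?lee_fin -?mulr2n; nra.
exact (le_measure leb3 (mem_set (measurable_cube3 c _))
  (mem_set (measurable_eps_nbhd3 _ _)) sub).
Qed.

Lemma leb3_eps_ball_le (c : P3) r : 0 < r ->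
  (leb3 (eps_nbhd dist3 [set c] r) <= ((2 * r) ^+ 3)%:E)%E.
Proof.
move=> r0; have sub : eps_nbhd dist3 [set c] r `<=` ball c r.
  by move=> z /eps_nbhd_set1 zc; apply: ball_dist3; rewrite dist3C.
apply: (@le_trans _ _ (leb3 (ball c r))).
  exact (le_measure leb3 (mem_set (measurable_eps_nbhd3 _ _))
    (mem_set (measurable_cube3 c _)) sub).
by rewrite leb3_ball ?mulr2n ?mulrDl ?mul1r //; lra.
Qed.

Lemma ahlfors_regular3 :
  ahlfors_regular ((@lebesgue_measure R \x @lebesgue_measure R) \x @lebesgue_measure R)%E
    dist3 3 2.
Proof.
split => //.
- exact: dist3C.
- exact: dist3_triangle.
- exact: measurable_eps_nbhd3.
- exact: leb3_eps_ball_ge.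
- exact: leb3_eps_ball_le.
Qed.

Lemma leb2_eps_ball_ge (c : R * R) r : 0 < r ->
  (((r / 2) ^+ 2)%:E <= leb2 (eps_nbhd dist2 [set c] r))%E.
Proof.
move=> r0; have sub : ball c (r / 2) `<=` eps_nbhd dist2 [set c] r.
  move=> z cz; apply/eps_nbhd_set1; rewrite dist2_dist3 dist3C.
  have cz3 : ball (c, 0 : R) (r / 2) (z, 0) by split => //; apply: ballxx; lra.
  by have := dist3_ball cz3; lra.
apply: (@le_trans _ _ (leb2 (ball c (r / 2)))).
  by rewrite leb2_ball ?lee_fin -?mulr2n; nra.
exact (le_measure leb2 (mem_set (measurable_cube2 c _))
  (mem_set (measurable_eps_nbhd2 _ _)) sub).
Qed.

Lemma leb2_eps_ball_le (c : R * R) r : 0 < r ->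
  (leb2 (eps_nbhd dist2 [set c] r) <= ((2 * r) ^+ 2)%:E)%E.
Proof.
move=> r0; have sub : eps_nbhd dist2 [set c] r `<=` ball c r.
  by move=> z /eps_nbhd_set1; rewrite dist2_dist3 dist3C => /ball_dist3[].
apply: (@le_trans _ _ (leb2 (ball c r))).
  exact (le_measure leb2 (mem_set (measurable_eps_nbhd2 _ _))
    (mem_set (measurable_cube2 c _)) sub).
by rewrite leb2_ball ?mulr2n ?mulrDl ?mul1r //; lra.
Qed.

Lemma ahlfors_regular2 :
  ahlfors_regular (@lebesgue_measure R \x @lebesgue_measure R)%E dist2 2 2.
Proof.
split => //.
- by move=> x y; rewrite !dist2_dist3 dist3C.
- by move=> x y z; rewrite !dist2_dist3; exact: dist3_triangle.
- exact: measurable_eps_nbhd2.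
- exact: leb2_eps_ball_ge.
- exact: leb2_eps_ball_le.
Qed.

End euclidean_space.

Definition mink_transfer_const (R : realType) (n m : nat) (C c s : R) : R :=
  (2 * C) ^+ (n + m) / c ^+ m * (c / 2) `^ (m%:R - s).

Lemma mink_transfer_const_gt0 (R : realType) n m (C c s : R) : 0 < C -> 0 < c ->
  0 < mink_transfer_const n m C c s.
Proof.
move=> C0 c0; rewrite /mink_transfer_const mulr_gt0 ?divr_gt0 ?exprn_gt0 ?powR_gt0 //.
  by rewrite mulr_gt0.
by rewrite divr_gt0.
Qed.

Lemma mink_ratio_ge0 d (T : measurableType d) (R : realType)
    (mu : {measure set T -> \bar R}) (dist : T -> T -> R) n (A : set T) s e :
  (0 <= mink_ratio mu dist n A s e)%E.
Proof. by rewrite /mink_ratio mule_ge0 // lee_fin invr_ge0 powR_ge0. Qed.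

Section co_Lipschitz.
Context dT (T : measurableType dT) dU (U : measurableType dU) (R : realType).
Variables (muT : {measure set T -> \bar R}) (distT : T -> T -> R) (n : nat).
Variables (muU : {measure set U -> \bar R}) (distU : U -> U -> R) (m : nat) (C : R).
Hypotheses (regT : ahlfors_regular muT distT n C) (regU : ahlfors_regular muU distU m C).
Variables (W : eqType) (X : set W) (p : W -> T) (q : W -> U) (c M : R) (y0 : U).
Hypotheses (c_gt0 : 0 < c) (M_ge0 : 0 <= M).
Hypothesis qX_bounded : forall w, X w -> distU (q w) y0 <= M.
Hypothesis co_Lipschitz :
  forall v w, X v -> X w -> c * distT (p v) (p w) <= distU (q v) (q w).

Let C_gt0 := ahlfors_const_gt0 regT.

Lemma eps_nbhd_le_co_Lipschitz e : 0 < e ->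
  (muT (eps_nbhd distT (p @` X) e) <=
   ((C * (2 * e)) ^+ n / (c * e / (2 * C)) ^+ m)%:E *
   muU (eps_nbhd distU (q @` X) (c * e / 2)))%E.
Proof.
(* A maximal [e]-separated subset [S] of [X] for the distance pulled back by [p]:
   [p S] is [e]-dense in [p X], which bounds the volume of [(p X)_e] from
   above, while [q S] is [c e]-separated, which bounds the volume of
   [(q X)_(c e / 2)] from below. *)
move=> e0; have ce0 : 0 < c * e by rewrite mulr_gt0.
pose rho v w := distT (p v) (p w).
have q_separated S : {in S, forall w, X w} -> separated rho e S ->
    pairwise (fun y z => c * e <= distU y z) (map q S).
  move=> SX sepS; rewrite pairwise_map.
  apply: (sub_in_pairwise _ (allss S) sepS) => v w vS wS /= evw.
  by apply: le_trans (co_Lipschitz (SX v vS) (SX w wS)); rewrite ler_pM2l.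
have qS_in S : {in S, forall w, X w} -> {in map q S, forall y, (q @` X) y}.
  by move=> SX _ /mapP[w wS ->]; exists w => //; exact: SX.
pose b := (c * e / (2 * C)) ^+ m.
have b0 : 0 < b by rewrite exprn_gt0 // divr_gt0 // mulr_gt0.
have [S [SX sepS denseS]] : exists S, [/\ {in S, forall w, X w}, separated rho e S &
    forall w, X w -> has (fun s => rho w s < e) S].
  apply: (@exists_maximal_separated _ _ _ _ _ (Num.truncn ((C * (M + c * e)) ^+ m / b))).
  move=> S SX sepS; have cM0 : 0 <= C * (M + c * e) by rewrite mulr_ge0 ?addr_ge0 // ltW.
  have qXM : forall y, (q @` X) y -> distU y y0 <= M.
    by move=> _ [w Xw <-]; exact: qX_bounded.
  have := separated_size_le regU ce0 M_ge0 qXM (qS_in S SX) (q_separated S SX sepS).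
  rewrite size_map -/b => Sb.
  by rewrite truncn_ge_nat ?ler_pdivlMr // mul0r exprn_ge0.
have cover : (muT (eps_nbhd distT (p @` X) e) <=
    ((size S)%:R * (C * (2 * e)) ^+ n)%:E)%E.
  rewrite -(size_map p); apply: (dense_covering regT e0) => _ [w Xw <-].
  by rewrite has_map; exact: denseS.
have := separated_packing regU ce0 (qS_in S SX) (q_separated S SX sepS).
rewrite size_map -/b => packing; apply: le_trans cover _.
have a0 : 0 <= (C * (2 * e)) ^+ n by rewrite exprn_ge0 // mulr_ge0 ?ltW //; lra.
have -> : (size S)%:R * (C * (2 * e)) ^+ n =
    (C * (2 * e)) ^+ n / b * ((size S)%:R * b) by field; rewrite gt_eqF.
by rewrite EFinM; apply: lee_wpmul2l packing; rewrite lee_fin divr_ge0 // ltW.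
Qed.

Lemma mink_ratio_le_co_Lipschitz s e : 0 < e ->
  (mink_ratio muT distT n (p @` X) s e <=
   (mink_transfer_const n m C c s)%:E * mink_ratio muU distU m (q @` X) s (c / 2 * e))%E.
Proof.
move=> e0; rewrite /mink_ratio [c / 2 * e]mulrAC.
apply: le_trans (lee_wpmul2r _ (eps_nbhd_le_co_Lipschitz e0)) _.
  by rewrite lee_fin invr_ge0 powR_ge0.
rewrite muleAC -EFinM muleA muleAC -EFinM; apply: lee_wpmul2r => //.
rewrite lee_fin le_eqVlt; apply/predU1P; left.
have pow_sub (k : nat) : e `^ (k%:R - s) = e ^+ k / e `^ s.
  by rewrite powRB ?powR_mulrn ?ltW //; apply/implyP => _; rewrite gt_eqF.
have es0 : e `^ s != 0 by rewrite gt_eqF // powR_gt0.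
have cs0 : (c / 2) `^ (m%:R - s) != 0 by rewrite gt_eqF // powR_gt0 // divr_gt0.
have -> : (c * e / 2) `^ (m%:R - s) = (c / 2) `^ (m%:R - s) * e `^ (m%:R - s).
  by rewrite mulrAC (@powRM _ (c / 2) e) // ?divr_ge0 // ltW.
rewrite /mink_transfer_const !pow_sub exprD !exprMn !exprVn !exprMn.
by field; rewrite es0 cs0 !expf_neq0 ?gt_eqF.
Qed.

Let K_gt0 s : 0 < mink_transfer_const n m C c s.
Proof. exact: mink_transfer_const_gt0. Qed.

Let c2_gt0 : 0 < c / 2. Proof. by rewrite divr_gt0. Qed.

Lemma upper_mink_le_co_Lipschitz s :
  (upper_mink muT distT n (p @` X) s <=
   (mink_transfer_const n m C c s)%:E * upper_mink muU distU m (q @` X) s)%E.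
Proof.
exact: le_limf_esup_dilate (K_gt0 s) c2_gt0 (mink_ratio_le_co_Lipschitz s).
Qed.

Lemma lower_mink_le_co_Lipschitz s :
  (lower_mink muT distT n (p @` X) s <=
   (mink_transfer_const n m C c s)%:E * lower_mink muU distU m (q @` X) s)%E.
Proof.
exact: le_limf_einf_dilate (K_gt0 s) c2_gt0 (mink_ratio_le_co_Lipschitz s).
Qed.

End co_Lipschitz.

Section mink_content_nonneg.
Context d (T : measurableType d) (R : realType) (mu : {measure set T -> \bar R}).
Variables (dist : T -> T -> R) (n : nat) (A : set T) (s : R).

Lemma upper_mink_ge0 : (0 <= upper_mink mu dist n A s)%E.
Proof. by apply: limf_esup_ge0 => // e; exact: mink_ratio_ge0. Qed.

Lemma lower_mink_ge0 : (0 <= lower_mink mu dist n A s)%E.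
Proof. by apply: limf_einf_ge0 => e; exact: mink_ratio_ge0. Qed.

End mink_content_nonneg.

Section bi_Lipschitz.
Context dT (T : measurableType dT) dU (U : measurableType dU) (R : realType).
Variables (muT : {measure set T -> \bar R}) (distT : T -> T -> R) (n : nat).
Variables (muU : {measure set U -> \bar R}) (distU : U -> U -> R) (m : nat) (C : R).
Hypotheses (regT : ahlfors_regular muT distT n C) (regU : ahlfors_regular muU distU m C).
Variables (W : eqType) (X : set W) (p : W -> T) (q : W -> U) (c M : R) (x0 : T) (y0 : U).
Hypotheses (c_gt0 : 0 < c) (M_ge0 : 0 <= M).
Hypothesis pX_bounded : forall w, X w -> distT (p w) x0 <= M.
Hypothesis qX_bounded : forall w, X w -> distU (q w) y0 <= M.
Hypothesis p_co_Lipschitz :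
  forall v w, X v -> X w -> c * distT (p v) (p w) <= distU (q v) (q w).
Hypothesis q_co_Lipschitz :
  forall v w, X v -> X w -> c * distU (q v) (q w) <= distT (p v) (p w).

Let eq0_of_le_mul (x y : \bar R) (K : R) :
  (x <= K%:E * y)%E -> (0 <= x)%E -> y = 0%E -> x = 0%E.
Proof.
move=> x_le x_ge0 y_eq0; apply/eqP; rewrite eq_le x_ge0 andbT.
by rewrite y_eq0 mule0 in x_le.
Qed.

Let upperTU s := upper_mink_le_co_Lipschitz regT regU c_gt0 M_ge0 qX_bounded p_co_Lipschitz s.
Let upperUT s := upper_mink_le_co_Lipschitz regU regT c_gt0 M_ge0 pX_bounded q_co_Lipschitz s.
Let lowerTU s := lower_mink_le_co_Lipschitz regT regU c_gt0 M_ge0 qX_bounded p_co_Lipschitz s.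
Let lowerUT s := lower_mink_le_co_Lipschitz regU regT c_gt0 M_ge0 pX_bounded q_co_Lipschitz s.

Lemma upper_box_dim_bi_Lipschitz :
  upper_box_dim muT distT n (p @` X) = upper_box_dim muU distU m (q @` X).
Proof.
rewrite /upper_box_dim.
suff -> : [set s | 0 <= s /\ upper_mink muT distT n (p @` X) s = 0%E] =
          [set s | 0 <= s /\ upper_mink muU distU m (q @` X) s = 0%E] by [].
apply/seteqP; split => s [s0 upper0]; split => //.
  by apply: eq0_of_le_mul (upperUT s) (upper_mink_ge0 _ _ _ _ _) upper0.
by apply: eq0_of_le_mul (upperTU s) (upper_mink_ge0 _ _ _ _ _) upper0.
Qed.

Lemma lower_box_dim_bi_Lipschitz :
  lower_box_dim muT distT n (p @` X) = lower_box_dim muU distU m (q @` X).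
Proof.
rewrite /lower_box_dim.
suff -> : [set s | 0 <= s /\ lower_mink muT distT n (p @` X) s = 0%E] =
          [set s | 0 <= s /\ lower_mink muU distU m (q @` X) s = 0%E] by [].
apply/seteqP; split => s [s0 lower0]; split => //.
  by apply: eq0_of_le_mul (lowerUT s) (lower_mink_ge0 _ _ _ _ _) lower0.
by apply: eq0_of_le_mul (lowerTU s) (lower_mink_ge0 _ _ _ _ _) lower0.
Qed.

Lemma mink_nondegenerate_bi_Lipschitz :
  mink_nondegenerate muT distT n (p @` X) -> mink_nondegenerate muU distU m (q @` X).
Proof.
move=> [s [s0 [lowerT_gt0 [_ upperT_fin]]]]; exists s; split => //; split; last split.
- rewrite lt_neqAle lower_mink_ge0 andbT eq_sym; apply/eqP => lowerU0.
  move: lowerT_gt0; rewrite (eq0_of_le_mul (lowerTU s) (lower_mink_ge0 _ _ _ _ _) lowerU0).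
  by rewrite ltxx.
- exact: limf_einf_le_esup.
- apply: le_lt_trans (upperUT s) _; rewrite lte_mul_pinfty // lee_fin ltW //.
  exact: mink_transfer_const_gt0 (ahlfors_const_gt0 regT) c_gt0.
Qed.

End bi_Lipschitz.

Section stereographic.
Context {R : realType}.
Implicit Types p q : R * R.
Local Notation sqnorm q := (q.1 ^+ 2 + q.2 ^+ 2).

Definition stereo_Phi q : (R * R) * R :=
  ((q.1 / (1 + sqnorm q), q.2 / (1 + sqnorm q)), 1 / (1 + sqnorm q)).

Lemma sqnorm_ge0 q : 0 <= sqnorm q.
Proof. by rewrite addr_ge0 ?sqr_ge0. Qed.

Lemma norm2_sqr q : norm2 q ^+ 2 = sqnorm q.
Proof. by rewrite /norm2 sqr_sqrtr // sqnorm_ge0. Qed.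

Lemma stereoE p : 0 < sqnorm p -> stereo p = stereo_Phi (Phi2 p).
Proof.
move=> r0; rewrite /stereo /stereo_Phi /Phi2 /= norm2_sqr /=.
have r1 : 1 + sqnorm p != 0 by rewrite gt_eqF // ltr_pwDl // ltW.
have r2 : sqnorm p ^+ 2 + sqnorm p != 0 by rewrite gt_eqF // addr_gt0 // exprn_gt0.
by congr (_, _); first congr (_, _); field; apply/and3P; split; rewrite // gt_eqF.
Qed.

Lemma sqnorm_Phi2 p : sqnorm (Phi2 p) = (sqnorm p)^-1.
Proof.
rewrite /Phi2 /= norm2_sqr !exprMn -mulrDl exprVn.
have [->|r0] := eqVneq (sqnorm p) 0; first by rewrite mul0r invr0.
by rewrite expr2 invfM mulrA (divff r0) mul1r.
Qed.

Lemma dist_stereo_Phi_sqr q q' :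
  dist3 (stereo_Phi q) (stereo_Phi q') ^+ 2 * ((1 + sqnorm q) * (1 + sqnorm q')) =
  dist2 q q' ^+ 2.
Proof.
have r0 : 1 + sqnorm q != 0 by rewrite gt_eqF // ltr_pwDl // sqnorm_ge0.
have r0' : 1 + sqnorm q' != 0 by rewrite gt_eqF // ltr_pwDl // sqnorm_ge0.
rewrite /dist3 /dist2 /norm2 !sqr_sqrtr ?addr_ge0 ?sqr_ge0 //=.
by rewrite /stereo_Phi /=; field; rewrite r0 r0'.
Qed.

Lemma dist_stereo_Phi_le q q' : dist3 (stereo_Phi q) (stereo_Phi q') <= dist2 q q'.
Proof.
have := dist_stereo_Phi_sqr q q'.
have [r r'] := (sqnorm_ge0 q, sqnorm_ge0 q').
rewrite -(ler_pXn2r (n := 2)) ?nnegrE ?sqrtr_ge0 // => <-.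
by have := sqr_ge0 (dist3 (stereo_Phi q) (stereo_Phi q')); nra.
Qed.

Lemma dist_stereo_Phi_ge (rho : R) q q' : sqnorm q <= rho -> sqnorm q' <= rho ->
  (1 + rho)^-1 * dist2 q q' <= dist3 (stereo_Phi q) (stereo_Phi q').
Proof.
move=> q_rho q'_rho; have [r r'] := (sqnorm_ge0 q, sqnorm_ge0 q').
have rho1 : 0 < 1 + rho by lra.
have [d2 d3] := (sqrtr_ge0 _ : 0 <= dist2 q q',
  sqrtr_ge0 _ : 0 <= dist3 (stereo_Phi q) (stereo_Phi q')).
rewrite mulrC ler_pdivrMr // -(ler_pXn2r (n := 2)) ?nnegrE //; last first.
  by rewrite mulr_ge0 // ltW.
rewrite -dist_stereo_Phi_sqr [X in _ <= X]exprMn ler_wpM2l ?sqr_ge0 //.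
by rewrite expr2 ler_pM //; lra.
Qed.

Lemma dist_stereo_Phi_origin q : dist3 (stereo_Phi q) ((0, 0), 0) <= 1.
Proof.
have r1 : 0 < 1 + sqnorm q by rewrite ltr_pwDl // sqnorm_ge0.
rewrite /dist3 /stereo_Phi /= !subr0 -[X in _ <= X]sqrtr1 ler_wsqrtr //.
rewrite !expr_div_n -!mulrDl expr1n addrC expr2 invfM mulrA divff ?gt_eqF // mul1r.
by rewrite invf_le1 // lerDl sqnorm_ge0.
Qed.

Lemma sqnorm_bounded_away (A : set (R * R)) : ~ closure A (0, 0) ->
  exists2 d : R, 0 < d & forall p, A p -> d <= sqnorm p.
Proof.
move=> /existsNP[B /not_implyP[/nbhs_ballP[r /= r0 rB] nAB]].
exists (r ^+ 2); first exact: exprn_gt0.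
move=> p Ap; rewrite leNgt; apply/negP => pr; apply: nAB; exists p; split => //.
apply: rB; have sqr_lt (x : R) : x ^+ 2 < r ^+ 2 -> `|x| < r.
  by move=> xr; apply/ltr_normlP; split; nra.
by split; rewrite /ball /= sub0r normrN; apply: sqr_lt;
  have := sqr_ge0 p.1; have := sqr_ge0 p.2; lra.
Qed.

End stereographic.

Lemma box_dims_stereo_Phi (R : realType) (X : set (R * R)) (rho : R) : 0 <= rho ->
  (forall x, X x -> x.1 ^+ 2 + x.2 ^+ 2 <= rho) ->
  upper_box_dim2 X = upper_box_dim3 (stereo_Phi @` X) /\
  lower_box_dim2 X = lower_box_dim3 (stereo_Phi @` X) /\
  (nondeg2 X -> nondeg3 (stereo_Phi @` X)).
Proof.
move=> rho0 X_rho; pose M := 1 + rho; pose c := M^-1.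
have M_gt0 : 0 < M by rewrite /M; lra.
have c_gt0 : 0 < c by rewrite invr_gt0.
have X_bounded x : X x -> dist2 (id x) (0, 0) <= M.
  move=> Xx; have := X_rho x Xx; rewrite /dist2 /= !subr0 -norm2_sqr.
  by have := sqrtr_ge0 (x.1 ^+ 2 + x.2 ^+ 2); rewrite /M /norm2; nra.
have stereoX_bounded x : X x -> dist3 (stereo_Phi x) ((0, 0), 0) <= M.
  by move=> _; apply: le_trans (dist_stereo_Phi_origin x) _; rewrite lerDl.
have stereo_co_Lipschitz x y : X x -> X y ->
    c * dist2 (id x) (id y) <= dist3 (stereo_Phi x) (stereo_Phi y).
  by move=> Xx Xy; apply: dist_stereo_Phi_ge; exact: X_rho.
have id_co_Lipschitz x y : X x -> X y ->
    c * dist3 (stereo_Phi x) (stereo_Phi y) <= dist2 (id x) (id y).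
  move=> _ _; apply: le_trans (dist_stereo_Phi_le x y).
  by rewrite ler_piMl ?sqrtr_ge0 // invf_le1 // lerDl.
have [reg2 reg3] := (@ahlfors_regular2 R, @ahlfors_regular3 R).
rewrite -[X in upper_box_dim2 X]image_id -[X in lower_box_dim2 X]image_id
  -[X in nondeg2 X]image_id.
split; [|split].
- exact (upper_box_dim_bi_Lipschitz reg2 reg3 c_gt0 (ltW M_gt0) X_bounded
    stereoX_bounded stereo_co_Lipschitz id_co_Lipschitz).
- exact (lower_box_dim_bi_Lipschitz reg2 reg3 c_gt0 (ltW M_gt0) X_bounded
    stereoX_bounded stereo_co_Lipschitz id_co_Lipschitz).
- exact (mink_nondegenerate_bi_Lipschitz reg2 reg3 c_gt0 (ltW M_gt0) X_bounded
    stereoX_bounded stereo_co_Lipschitz id_co_Lipschitz).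
Qed.

Theorem proposition2p21 (R : realType) (A : set (R * R)) :
  ~ bounded2 A -> ~ closure A (0, 0) ->
  upper_box_dim_unb A = upper_box_dim3 (stereo @` A) /\
  lower_box_dim_unb A = lower_box_dim3 (stereo @` A) /\
  (nondeg_unb A -> nondeg3 (stereo @` A)).
Proof.
move=> _ /sqnorm_bounded_away[d d0 Ad].
have PhiA_bounded x : (Phi2 @` A) x -> x.1 ^+ 2 + x.2 ^+ 2 <= d^-1.
  move=> [p Ap <-]; have dp := Ad p Ap.
  by rewrite sqnorm_Phi2 lef_pV2 ?posrE //; apply: lt_le_trans dp.
have -> : stereo @` A = stereo_Phi @` (Phi2 @` A).
  rewrite image_comp; apply: eq_imagel => p Ap; apply: stereoE.
  exact: lt_le_trans (Ad p Ap).
apply: box_dims_stereo_Phi PhiA_bounded.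
by rewrite invr_ge0 ltW.
Qed.
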